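(* Let $M$ and $M'$ be two certification menus (of threshold certificates with transfers) with $M\subseteq M'$. Then $\operatorname{Wel}(M')-\operatorname{Rev}(M')\ge\operatorname{Wel}(M)-\operatorname{Rev}(M)$; that is, the total utility of consumers and producers under $M'$ is at least that under $M$, regardless of the transfers attached to the additional certificates.
   Context: Certification market: producers with types $\psi$ (atomless distribution $G$, compact support), consumers with types $\phi$ (atomless distribution $F$, compact support), quality $q\in[0,1]$; cost $g(q;\psi)$ weakly convex non-decreasing in $q$, $g(0;\psi)=0$; value $f(q;\phi)$ weakly concave non-decreasing in $q$, $f(0;\phi)=0$, $0\le f\le1$; strict single-crossing: for $\phi_1<\phi_2$, $q_1<q_2$: $f(q_2;\phi_2)-f(q_1;\phi_2)>f(q_2;\phi_1)-f(q_1;\phi_1)$, and for $\psi_1<\psi_2$, $q_1<q_2$: $g(q_2;\psi_2)-g(q_1;\psi_2)<g(q_2;\psi_1)-g(q_1;\psi_1)$. A menu is a set $\{(q_i,t_i)\}$ of threshold certificates $[q_i,1]$ with transfers $t_i$, always including $(0,0)$; the certifier incurs verification cost $c\ge0$ per non-trivial certificate; a producer choosing threshold $q_i$ produces at quality $q_i$. Producers choose certificates in equilibrium and then trade in a competitive (Walrasian) market equilibrium; in equilibrium producer $\psi$ trades with consumer $\phi(\psi)$, $F(\phi(\psi))=G(\psi)$, and picks the menu item maximizing $f(q_i;\phi(\psi))-g(q_i;\psi)-t_i$. $\operatorname{Rev}(M)$ is the certifier's equilibrium revenue (transfers minus verification costs) and $\operatorname{Wel}(M)$ is the equilibrium total utility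 of consumers, producers and certifier. *)

From HB Require Import structures.
From mathcomp Require Import all_boot all_order all_algebra.
From mathcomp Require Import all_classical all_reals all_analysis.
Set Implicit Arguments. Unset Strict Implicit. Unset Printing Implicit Defensive.
Import Order.TTheory GRing.Theory Num.Theory.
Local Open Scope classical_set_scope.
Local Open Scope ring_scope.

Definition distfun (R : realType) (P : probability R R) (x : R) : R :=
  fine (P [set` `]-oo, x]]).

Definition atomless_compact (R : realType) (P : probability R R) : Prop :=
  (forall x : R, P [set x] = 0%E) /\
  exists a b : R, P [set` `[a, b]] = 1%E.

(* g(q;psi): cost of producing quality q for producer type psi.
   Written as g q psi. Weakly convex and non-decreasing in q on [0,1],
   g(0;psi) = 0, strictly single-crossing. *)
Definition cost_assumptions (R : realType) (g : R -> R -> R) : Prop :=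
  [/\ forall psi, g 0 psi = 0,
      forall psi q1 q2, 0 <= q1 -> q1 <= q2 -> q2 <= 1 -> g q1 psi <= g q2 psi,
      forall psi x y l, 0 <= x <= 1 -> 0 <= y <= 1 -> 0 <= l <= 1 ->
        g (l * x + (1 - l) * y) psi <= l * g x psi + (1 - l) * g y psi &
      forall psi1 psi2 q1 q2, psi1 < psi2 -> 0 <= q1 -> q1 < q2 -> q2 <= 1 ->
        g q2 psi2 - g q1 psi2 < g q2 psi1 - g q1 psi1].

(* f(q;phi): value of quality q to consumer type phi, written f q phi.
   Weakly concave and non-decreasing in q on [0,1], f(0;phi)=0,
   0 <= f <= 1, strictly single-crossing. *)
Definition value_assumptions (R : realType) (f : R -> R -> R) : Prop :=
  [/\ forall phi, f 0 phi = 0,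
      forall phi q, 0 <= q <= 1 -> 0 <= f q phi <= 1,
      forall phi q1 q2, 0 <= q1 -> q1 <= q2 -> q2 <= 1 -> f q1 phi <= f q2 phi,
      forall phi x y l, 0 <= x <= 1 -> 0 <= y <= 1 -> 0 <= l <= 1 ->
        l * f x phi + (1 - l) * f y phi <= f (l * x + (1 - l) * y) phi &
      forall phi1 phi2 q1 q2, phi1 < phi2 -> 0 <= q1 -> q1 < q2 -> q2 <= 1 ->
        f q2 phi2 - f q1 phi2 > f q2 phi1 - f q1 phi1].

(* A menu: a set of threshold certificates (q, t) (certificate [q,1] with
   transfer t), with q in [0,1], always containing the trivial item (0,0). *)
Definition menu (R : realType) (M : set (R * R)) : Prop :=
  M (0, 0) /\ forall m, M m -> 0 <= m.1 <= 1.

Definition pair_surplus (R : realType) (f g : R -> R -> R) (phi psi : R)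
  (m : R * R) : R := f m.1 phi - g m.1 psi - m.2.

(* Equilibrium certificate choice: s psi is the menu item chosen by producer
   psi, who trades with consumer phi(psi); s psi maximizes
   f(q_i;phi(psi)) - g(q_i;psi) - t_i over the menu (for G-a.e. psi). *)
Definition equilibrium_choice (R : realType) (G : probability R R)
  (f g : R -> R -> R) (phi : R -> R) (M : set (R * R)) (s : R -> R * R) : Prop :=
  {ae G, forall psi, M (s psi) /\
     forall m, M m -> pair_surplus f g (phi psi) psi m
                      <= pair_surplus f g (phi psi) psi (s psi)}.

Definition verif_cost (R : realType) (c : R) (m : R * R) : R :=
  if 0 < m.1 then c else 0.

Definition certifier_util (R : realType) (c : R) (m : R * R) : R :=
  m.2 - verif_cost c m.

Definition total_util (R : realType) (f g : R -> R -> R) (c : R)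
  (phi psi : R) (m : R * R) : R :=
  pair_surplus f g phi psi m + certifier_util c m.

(* Rev(M): certifier's equilibrium revenue (transfers minus verification
   costs), given equilibrium choice s. *)
Definition Rev (R : realType) (G : probability R R) (c : R) (s : R -> R * R) : R :=
  Rintegral G setT (fun psi => certifier_util c (s psi)).

Definition Wel (R : realType) (G : probability R R) (f g : R -> R -> R)
  (c : R) (phi : R -> R) (s : R -> R * R) : R :=
  Rintegral G setT (fun psi => total_util f g c (phi psi) psi (s psi)).

From HB Require Import structures.
From mathcomp Require Import all_boot all_order all_algebra.
From mathcomp Require Import all_classical all_reals all_analysis.
Set Implicit Arguments. Unset Strict Implicit. Unset Printing Implicit Defensive.
Import Order.TTheory GRing.Theory Num.Theory.
Local Open Scope classical_set_scope.
Local Open Scope ring_scope.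

(* Wel(M) - Rev(M) is the expected joint surplus of the matched
   consumer/producer pairs, i.e. the integral of
   f(q;phi(psi)) - g(q;psi) - t over the chosen certificates, because the
   certifier's utility cancels.  Every item of M is still available under
   M', and each pair picks an item maximizing exactly this joint surplus;
   so, by revealed preference, the surplus under M' dominates the surplus
   under M for G-almost every producer type.  Integrating an almost-sure
   inequality between integrable functions gives the claim. *)

Section ae_monotone_Rintegral.
Context d (T : measurableType d) (R : realType).
Variable mu : {measure set T -> \bar R}.
Variable D : set T.
Hypothesis mD : measurable D.

(* An integrable real function that is almost everywhere non-negative on D
   has a non-negative integral: it coincides a.e. with its positive part. *)
Lemma Rintegral_ae_ge0 (h : T -> R) :
  mu.-integrable D (EFin \o h) ->
  {ae mu, forall x, D x -> 0 <= h x} ->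
  0 <= \int[mu]_(x in D) h x.
Proof.
move=> ih h_ge0.
have mh := measurable_int _ ih.
have h_pos : ae_eq mu D (EFin \o h) ((EFin \o h)^\+)%E.
  apply: filterS h_ge0 => x h0 Dx.
  by rewrite funeposE /= max_l // lee_fin h0.
rewrite /Rintegral (ae_eq_integral ((EFin \o h)^\+)%E) //.
- by apply: fine_ge0; apply: integral_ge0 => x _; exact: funepos_ge0.
- exact: measurable_realfun.measurable_funepos.
Qed.

Lemma ae_le_Rintegral (h1 h2 : T -> R) :
  mu.-integrable D (EFin \o h1) -> mu.-integrable D (EFin \o h2) ->
  {ae mu, forall x, D x -> h1 x <= h2 x} ->
  \int[mu]_(x in D) h1 x <= \int[mu]_(x in D) h2 x.
Proof.
move=> ih1 ih2 h12; rewrite -subr_ge0 -RintegralB //.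
apply: Rintegral_ae_ge0.
  have := integrableB mD ih2 ih1.
  by apply: eq_integrable => // x _ /=; rewrite EFinB.
by apply: filterS h12 => x le12 Dx; rewrite subr_ge0 le12.
Qed.

End ae_monotone_Rintegral.

Section joint_surplus.
Context (R : realType) (G : probability R R) (f g : R -> R -> R).
Variables (phi : R -> R) (c : R).

Lemma total_util_subr_certifier (psi : R) (m : R * R) :
  total_util f g c (phi psi) psi m - certifier_util c m
  = pair_surplus f g (phi psi) psi m.
Proof. by rewrite /total_util addrK. Qed.

Lemma Wel_subr_Rev (s : R -> R * R) :
  G.-integrable setT (fun psi => (certifier_util c (s psi))%:E) ->
  G.-integrable setT (fun psi => (total_util f g c (phi psi) psi (s psi))%:E) ->
  Wel G f g c phi s - Rev G c s
  = Rintegral G setT (fun psi => pair_surplus f g (phi psi) psi (s psi)).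
Proof.
move=> icert itotal; rewrite /Wel /Rev -RintegralB //.
by apply: eq_Rintegral => psi _; exact: total_util_subr_certifier.
Qed.

Lemma integrable_pair_surplus (s : R -> R * R) :
  G.-integrable setT (fun psi => (certifier_util c (s psi))%:E) ->
  G.-integrable setT (fun psi => (total_util f g c (phi psi) psi (s psi))%:E) ->
  G.-integrable setT
    (EFin \o (fun psi => pair_surplus f g (phi psi) psi (s psi))).
Proof.
move=> icert itotal; have := integrableB measurableT itotal icert.
apply: eq_integrable => // psi _ /=.
by rewrite -EFinB total_util_subr_certifier.
Qed.

(* Revealed preference: every item of M is still offered in M', so a pair
   choosing optimally in M' does at least as well as it did in M. *)
Lemma revealed_preference (M M' : set (R * R)) (s s' : R -> R * R) :
  M `<=` M' ->
  equilibrium_choice G f g phi M s ->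
  equilibrium_choice G f g phi M' s' ->
  {ae G, forall psi, setT psi ->
     pair_surplus f g (phi psi) psi (s psi)
     <= pair_surplus f g (phi psi) psi (s' psi)}.
Proof.
move=> MM' eq_s eq_s'.
apply: filterS (filterI eq_s eq_s') => psi [[Ms _] [_ opt_s']] _.
exact/opt_s'/MM'.
Qed.

End joint_surplus.

Theorem proposition4 (R : realType)
  (G F : probability R R) (f g : R -> R -> R) (phi : R -> R) (c : R)
  (M M' : set (R * R)) (s s' : R -> R * R) :
  atomless_compact G -> atomless_compact F ->
  value_assumptions f -> cost_assumptions g ->
  0 <= c ->
  (forall psi, distfun F (phi psi) = distfun G psi) ->
  menu M -> menu M' -> M `<=` M' ->
  equilibrium_choice G f g phi M s ->
  equilibrium_choice G f g phi M' s' ->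
  G.-integrable setT (fun psi => (certifier_util c (s psi))%:E) ->
  G.-integrable setT (fun psi => (total_util f g c (phi psi) psi (s psi))%:E) ->
  G.-integrable setT (fun psi => (certifier_util c (s' psi))%:E) ->
  G.-integrable setT (fun psi => (total_util f g c (phi psi) psi (s' psi))%:E) ->
  Wel G f g c phi s' - Rev G c s' >= Wel G f g c phi s - Rev G c s.
Proof.
move=> _ _ _ _ _ _ _ _ MM' eq_s eq_s' icert itotal icert' itotal'.
rewrite !Wel_subr_Rev //.
apply: ae_le_Rintegral => //.
- exact: integrable_pair_surplus icert itotal.
- exact: integrable_pair_surplus icert' itotal'.
- exact: revealed_preference MM' eq_s eq_s'.
Qed.
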